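(* Consider the $q$-composite random key predistribution scheme on $n$ sensors with key pool size $P_n$ and key ring size $K_n$, where $q$ is a fixed positive integer (not depending on $n$) and $q\le K_n\le P_n$. Suppose an adversary captures a uniformly random set of $m=m(n)$ sensors and learns all keys in their key rings, and let $p_{\textnormal{compromised}}$ denote the probability that the secure link between two (distinct) non-captured sensors is compromised, conditioned on these two sensors sharing at least $q$ keys. If $$m = o\!\left(\frac{P_n}{K_n}\right)\quad (n\to\infty),$$ then $p_{\textnormal{compromised}} = o(1)$, i.e., $p_{\textnormal{compromised}}\to 0$ as $n\to\infty$.
   Context: In the $q$-composite scheme, each of the $n$ sensors independently receives a key ring consisting of $K_n$ distinct keys chosen uniformly at random among all $K_n$-subsets of a pool of $P_n$ keys. Two sensors have a secure link if and only if their key rings share at least $q$ keys. The secure link between two non-captured sensors is compromised if and only if every key shared by their two key rings belongs to the key ring of at least one captured sensor. All asymptotics are as $n\to\infty$; $x_n=o(y_n)$ means $x_n/y_n\to 0$. *)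

From HB Require Import structures.
From mathcomp Require Import all_boot all_order all_algebra.
From mathcomp Require Import all_classical all_reals all_analysis.
Set Implicit Arguments. Unset Strict Implicit. Unset Printing Implicit Defensive.
Import Order.TTheory GRing.Theory Num.Theory.
Local Open Scope ring_scope.

(* q-composite scheme with n sensors (labelled by 'I_n), key pool 'I_P,
   key rings of size K.  An outcome of the random experiment consists of
   - the key rings  r : {ffun 'I_n -> {set 'I_P}}  (each ring a K-subset;
     rings are independent and uniform, i.e. the assignment r is uniform
     among those with all rings of size K),
   - the captured set  A : {set 'I_n}  with #|A| = m (uniform, independent),
   - an ordered pair (i, j) of sensors (uniform).
   All these choices are uniform and independent, so probabilities are
   ratios of cardinalities in the finite product space. *)

Definition outcome (n P : nat) : finType :=
  ({ffun 'I_n -> {set 'I_P}} * {set 'I_n} * 'I_n * 'I_n)%type.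

Definition valid_outcome (n P K m : nat) (w : outcome n P) : bool :=
  let: (r, A, _, _) := w in [forall s, #|r s| == K] && (#|A| == m)%N.

Definition secure_link (n P q : nat) (r : {ffun 'I_n -> {set 'I_P}}) (i j : 'I_n) :=
  (q <= #|r i :&: r j|)%N.

Definition compromised (n P : nat) (r : {ffun 'I_n -> {set 'I_P}})
  (A : {set 'I_n}) (i j : 'I_n) :=
  (r i :&: r j) \subset \bigcup_(a in A) r a.

Definition cond_event (n P K m q : nat) : {set outcome n P} :=
  [set w | valid_outcome K m w &&
    (let: (r, A, i, j) := w in
      [&& i != j, i \notin A, j \notin A & secure_link q r i j])].

Definition comp_event (n P K m q : nat) : {set outcome n P} :=
  [set w in cond_event n P K m q |
    let: (r, A, i, j) := w in compromised r A i j].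

(* p_compromised: conditional probability that the link between two
   distinct non-captured sensors is compromised, given that they share at
   least q keys (0 if the conditioning event is empty). *)
Definition p_compromised (R : realType) (n P K m q : nat) : R :=
  (#|comp_event n P K m q|)%:R / (#|cond_event n P K m q|)%:R.

(* Let x be the first key shared by the two sensors (there is one since q > 0).
   A compromised link has x in the ring of some captured sensor a.  For a fixed
   a, replacing the ring of a by its image under the transposition (x y) maps
   the outcomes with x in that ring, paired with an arbitrary key y, injectively
   to outcomes paired with a key y of that ring; hence x lies in the ring of a
   with conditional probability at most K / P.  A union bound over the m
   captured sensors gives p_compromised <= m K / P. *)

From mathcomp Require Import all_boot all_order all_algebra all_fingroup.
Set Implicit Arguments. Unset Strict Implicit. Unset Printing Implicit Defensive.

Lemma leq_card_bigcup (I T : finType) (F : I -> {set T}) :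
  #|\bigcup_i F i| <= \sum_i #|F i|.
Proof.
elim/big_rec2: _ => [|i n U _ leUn]; first by rewrite cards0.
by rewrite (leq_trans (leq_card_setU _ _).1) ?leq_add2l.
Qed.

Lemma card_dep_setX (T Y : finType) (F : {set T}) (S : T -> {set Y}) :
  #|[set p : T * Y | (p.1 \in F) && (p.2 \in S p.1)]| = \sum_(w in F) #|S w|.
Proof.
rewrite -sum1_card (partition_big fst (fun w => w \in F)) => [|[w y]]; last first.
  by rewrite inE => /andP[].
apply: eq_bigr => w wF; rewrite -sum1_card (reindex (pair w)) /=.
  by apply: eq_bigl => y; rewrite inE /= wF eqxx andbT.
by exists snd => [y _|[w' y] /andP[_ /eqP <-]].
Qed.

Lemma sum_card_incidence (I T : finType) (C : {set T}) (rel : I -> T -> bool) :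
  \sum_i #|[set w in C | rel i w]| = \sum_(w in C) #|[set i | rel i w]|.
Proof.
under eq_bigr => i _ do rewrite -sum1_card big_mkcond.
rewrite exchange_big; under [RHS]eq_bigr => w _ do rewrite -sum1_card.
rewrite [RHS]big_mkcond; apply: eq_bigr => w _.
case: ifP => wC; last by rewrite big1 // => i _; rewrite inE wC.
by rewrite [RHS]big_mkcond; apply: eq_bigr => i _; rewrite !inE wC.
Qed.

Lemma tperm_imsetK (T : finType) (x y : T) (S : {set T}) :
  tperm x y @: (tperm x y @: S) = S.
Proof. by rewrite -imset_comp (eq_imset _ (tpermK x y)) imset_id. Qed.

Section CapturedKeys.
Variables n P K m q : nat.
Local Notation outcome := (outcome n P).
Local Notation cond_event := (cond_event n P K m q).

Definition captured (w : outcome) : {set 'I_n} := let: (_, A, _, _) := w in A.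
Definition ring_of (a : 'I_n) (w : outcome) : {set 'I_P} := let: (r, _, _, _) := w in r a.
Definition first_shared_key (w : outcome) : option 'I_P :=
  let: (r, _, i, j) := w in [pick x in r i :&: r j].

Definition cond_captured (a : 'I_n) : {set outcome} :=
  [set w in cond_event | a \in captured w].
Definition key_captured (a : 'I_n) : {set outcome} :=
  [set w in cond_captured a |
    if first_shared_key w is Some x then x \in ring_of a w else false].

(* Sensors i and j are left alone, so their first shared key x is unchanged and
   the map is an involution. *)
Definition swap_in_ring (a : 'I_n) (p : outcome * 'I_P) : outcome * 'I_P :=
  let: (r, A, i, j, y) := p in
  if (a != i) && (a != j) then
    if [pick x in r i :&: r j] is Some x then
      ([ffun b => if b == a then tperm x y @: r b else r b], A, i, j, y)
    else p
  else p.

Lemma swap_in_ringK a : involutive (swap_in_ring a).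
Proof.
case=> [[[[r A] i] j] y]; rewrite /swap_in_ring.
have [/andP[ai aj]|] := boolP ((a != i) && (a != j)); last by move/negbTE => ->.
case Ex: [pick x in r i :&: r j] => [x|]; last by rewrite ai aj Ex.
rewrite !ffunE ai aj eq_sym (negbTE ai) eq_sym (negbTE aj) Ex.
congr (_, _, _, _, _); apply/ffunP => b; rewrite !ffunE.
by case: eqP => // ->; rewrite tperm_imsetK.
Qed.

Lemma card_ring_of a w : w \in cond_event -> #|ring_of a w| = K.
Proof.
by case: w => [[[r A] i] j]; rewrite inE => /andP[/andP[/forallP/(_ a)/eqP]].
Qed.

Lemma swap_in_ring_sub a :
  swap_in_ring a @: [set p | (p.1 \in key_captured a) && (p.2 \in setT)]
    \subset [set p | (p.1 \in cond_captured a) && (p.2 \in ring_of a p.1)].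
Proof.
apply/subsetP => _ /imsetP[[[[[r A] i] j] y] + ->].
rewrite !inE andbT => /andP[/andP[/andP[/andP[/forallP cardr cardA]]]].
rewrite /secure_link => /and4P[ij iA jA link] aA.
have ai : a != i by apply: contraNneq iA => <-.
have aj : a != j by apply: contraNneq jA => <-.
rewrite /swap_in_ring ai aj /=; case: pickP => // x _ xa /=.
rewrite /secure_link !ffunE eqxx (eq_sym i a) (negbTE ai) (eq_sym j a) (negbTE aj).
rewrite cardA ij iA jA aA link !andbT /=; apply/andP; split.
  apply/forallP => b; rewrite ffunE; have [->|_] := eqVneq b a; last exact: cardr.
  by rewrite card_imset ?cardr //; apply: perm_inj.
by apply/imsetP; exists x; rewrite ?tpermL.
Qed.

Lemma card_key_captured a : #|key_captured a| * P <= #|cond_captured a| * K.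
Proof.
have := subset_leq_card (swap_in_ring_sub a).
rewrite card_imset; last exact: inv_inj (swap_in_ringK a).
rewrite (card_dep_setX _ (fun=> setT)) card_dep_setX sum_nat_const cardsT card_ord.
rewrite (eq_bigr (fun=> K)) ?sum_nat_const // => w /setIdP[wc _].
exact: card_ring_of.
Qed.

Lemma comp_event_sub_key_captured :
  0 < q -> comp_event n P K m q \subset \bigcup_a key_captured a.
Proof.
move=> q_gt0; apply/subsetP => -[[[r A] i] j] /setIdP[wc comp].
have [x Ex xij] :
    exists2 x, first_shared_key (r, A, i, j) = Some x & x \in r i :&: r j.
  rewrite /=; case: pickP => [x xij|no_key]; first by exists x.
  by move: wc; rewrite inE /secure_link (eq_card0 no_key) leqNgt q_gt0 !andbF.
have /bigcupP[a aA xa] := subsetP comp x xij.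
by apply/bigcupP; exists a => //; rewrite inE Ex xa andbT inE wc.
Qed.

Lemma sum_card_cond_captured : \sum_a #|cond_captured a| = m * #|cond_event|.
Proof.
rewrite sum_card_incidence mulnC -sum_nat_const.
apply: eq_bigr => -[[[r A] i] j]; rewrite inE => /andP[/andP[_ /eqP <-] _].
by apply: eq_card => a; rewrite inE.
Qed.

Lemma card_comp_event_le :
  0 < q -> #|comp_event n P K m q| * P <= m * K * #|cond_event|.
Proof.
move=> q_gt0.
have le_comp : #|comp_event n P K m q| <= \sum_a #|key_captured a|.
  apply: leq_trans (leq_card_bigcup _).
  exact: subset_leq_card (comp_event_sub_key_captured q_gt0).
apply: leq_trans (leq_mul le_comp (leqnn P)) _.
rewrite mulnAC -sum_card_cond_captured !big_distrl; apply: leq_sum => a _.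
exact: card_key_captured.
Qed.

End CapturedKeys.

From mathcomp Require Import all_classical all_reals all_analysis.
Import Order.TTheory GRing.Theory Num.Theory.
Local Open Scope ring_scope.
Local Open Scope classical_set_scope.

Lemma p_compromised_le (R : realType) n P K m q :
  (0 < q)%N -> (0 < K)%N -> (0 < P)%N ->
  p_compromised R n P K m q <= m%:R / (P%:R / K%:R).
Proof.
move=> q_gt0 K_gt0 P_gt0; rewrite /p_compromised.
have [->|cond_neq0] := eqVneq #|cond_event n P K m q| 0%N.
  by rewrite invr0 mulr0 !divr_ge0.
rewrite invf_div mulrA ler_pdivrMr ?ltr0n ?lt0n // mulrAC ler_pdivlMr ?ltr0n //.
by rewrite -!natrM ler_nat card_comp_event_le.
Qed.

Theorem theorem1 (R : realType) (q : nat) (P K m : nat -> nat) :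
  (0 < q)%N ->
  (forall n, (q <= K n)%N /\ (K n <= P n)%N) ->
  (fun n => (m n)%:R / ((P n)%:R / (K n)%:R) : R) @ \oo --> 0 ->
  (fun n => p_compromised R n (P n) (K n) (m n) q) @ \oo --> 0.
Proof.
move=> q_gt0 qKP m_small.
have p_bounds : \forall n \near \oo, 0 <= p_compromised R n (P n) (K n) (m n) q
                                   <= (m n)%:R / ((P n)%:R / (K n)%:R).
  near=> n; have [qK KP] := qKP n; have K_gt0 := leq_trans q_gt0 qK.
  by rewrite divr_ge0 //= p_compromised_le // (leq_trans K_gt0 KP).
  Unshelve. all: end_near.
exact: (squeeze_cvgr p_bounds (cvg_cst 0) m_small).
Qed.
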